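(* Let $G$ be a finite group, $p>2$ a prime, and $n>0$ an integer with $\gcd(n,p)=1$. Then $P_e(G)\cong P_e(\mathbb{Z}_p\times\mathbb{Z}_p\times\mathbb{Z}_p\times\mathbb{Z}_n)$ if and only if $G\cong \mathbb{Z}_p\times\mathbb{Z}_p\times\mathbb{Z}_p\times\mathbb{Z}_n$ or $G\cong K\times\mathbb{Z}_n$, where $K$ is the unique non-abelian group of order $p^3$ and exponent $p$.
   Context: All groups are finite. $\mathbb{Z}_k$ denotes the cyclic group of order $k$. $K$ is the non-abelian group of order $p^3$ and exponent $p$, with presentation $\langle x,y,z \mid x^p=y^p=z^p=1,\ [x,y]=z,\ [x,z]=[y,z]=1\rangle$. For a group $X$, the enhanced power graph $P_e(X)$ is the simple graph with vertex set $X$ in which two distinct vertices $x,y$ are adjacent if and only if $\langle x,y\rangle$ is cyclic. *)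

From HB Require Import structures.
From mathcomp Require Import all_boot all_order all_algebra all_fingroup all_solvable.
Set Implicit Arguments.
Unset Strict Implicit.
Unset Printing Implicit Defensive.
Local Open Scope group_scope.

Definition epg_adj (gT : finGroupType) (x y : gT) : bool :=
  (x != y) && cyclic <<[set x; y]>>.

Definition epg_isomorphic (gT hT : finGroupType) (G : {set gT}) (H : {set hT}) : Prop :=
  exists f : gT -> hT,
    [/\ {in G &, injective f}, f @: G = H &
        {in G &, forall x y, epg_adj x y = epg_adj (f x) (f y)}].

(* Z_k as the group Zp k (of order k for k > 0; 'Z_k alone is wrong for k = 1). *)
Definition Zppp_n (p n : nat) : {group ('Z_p * 'Z_p * 'Z_p * 'Z_n)%type} :=
  setX_group (setX_group (setX_group (Zp_group p) (Zp_group p)) (Zp_group p)) (Zp_group n).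

(* K x Z_n, with K = p^{1+2} the extraspecial group of order p^3
   (of exponent p for odd p), from mathcomp's extraspecial.v *)
Definition K_n (p n : nat) : {group (p^{1+2} * 'Z_n)%type} :=
  setX_group [set: p^{1+2}]%G (Zp_group n).

From HB Require Import structures.
From mathcomp Require Import all_boot all_order all_algebra all_fingroup all_solvable.
Set Implicit Arguments.
Unset Strict Implicit.
Unset Printing Implicit Defensive.
Local Open Scope group_scope.

(* If G = P x C with |P| = p^3, exponent P | p and C cyclic of order n coprime
   to p, then <<x, y>> is cyclic iff <<x_p, y_p>> is, and for nontrivial a, b
   in P, <<a, b>> is cyclic iff <[a]> = <[b]>. Hence all such groups have
   isomorphic enhanced power graphs (match the subgroups of order p, then their
   nontrivial elements, and the factors C arbitrarily), and up to isomorphism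
   they are Z_p^3 x Z_n and K x Z_n. Conversely, a graph isomorphism with
   P_e(Z_p^3 x Z_n) forces |G| = p^3 n, exactly n dominating vertices, and at
   every other vertex a closed neighbourhood of size pn that is a clique. Such
   a neighbourhood is a cyclic subgroup of order pn containing every dominating
   vertex, so the dominating vertices form a central cyclic subgroup of order
   n, every element order divides pn, and a Sylow p-subgroup of exponent p is
   a complement. *)

Section CyclicPairs.
Variable gT : finGroupType.
Implicit Types (x y a b c : gT) (G : {group gT}).

Lemma gen2_subG x y G : (<<[set x; y]>> \subset G) = (x \in G) && (y \in G).
Proof. by rewrite gen_subG subUset !sub1set. Qed.

Lemma mem_gen2l x y : x \in <<[set x; y]>>.
Proof. by rewrite mem_gen // !inE eqxx. Qed.

Lemma mem_gen2r x y : y \in <<[set x; y]>>.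
Proof. by rewrite mem_gen // !inE eqxx orbT. Qed.

Lemma cyclic2C x y : cyclic <<[set x; y]>> = cyclic <<[set y; x]>>.
Proof. by rewrite setUC. Qed.

Lemma cyclic2_cycle a b c : a \in <[c]> -> b \in <[c]> -> cyclic <<[set a; b]>>.
Proof. by move=> ac bc; apply: cyclicS (cycle_cyclic c); rewrite gen2_subG ac. Qed.

Lemma cyclic2xx x : cyclic <<[set x; x]>>.
Proof. exact: cyclic2_cycle (cycle_id x) (cycle_id x). Qed.

Lemma cyclic21 x : cyclic <<[set 1; x]>>.
Proof. exact: cyclic2_cycle (group1 _) (cycle_id x). Qed.

Lemma cyclic2_commute x y : cyclic <<[set x; y]>> -> commute x y.
Proof. by move/cyclic_abelian/centsP; apply; rewrite ?mem_gen2l ?mem_gen2r. Qed.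

Lemma cyclic2_epg_adj x y : cyclic <<[set x; y]>> = (x == y) || epg_adj x y.
Proof. by rewrite /epg_adj; case: eqVneq => [-> | _]; rewrite ?cyclic2xx. Qed.

End CyclicPairs.

Section Neighbourhoods.
Variable gT : finGroupType.
Implicit Types (x y z : gT) (S : {set gT}) (G : {group gT}).

Definition epg_nbhd S x := [set y in S | cyclic <<[set x; y]>>].

Definition epg_dom S := [set x in S | S \subset epg_nbhd S x].

Definition epg_clique S := {in S &, forall y z, cyclic <<[set y; z]>>}.

Lemma epg_nbhd_sub S x : epg_nbhd S x \subset S.
Proof. by apply/subsetP => y; rewrite inE => /andP[]. Qed.

Lemma epg_nbhd_id S x : x \in S -> x \in epg_nbhd S x.
Proof. by move=> Sx; rewrite inE Sx cyclic2xx. Qed.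

Lemma epg_dom_sub S : epg_dom S \subset S.
Proof. by apply/subsetP => x; rewrite inE => /andP[]. Qed.

Lemma epg_domP S x y : x \in epg_dom S -> y \in S -> cyclic <<[set x; y]>>.
Proof. by rewrite inE => /andP[_ /subsetP sSN] /sSN; rewrite inE => /andP[]. Qed.

Lemma epg_dom_sub_nbhd S x : x \in S -> epg_dom S \subset epg_nbhd S x.
Proof.
move=> Sx; apply/subsetP => d Dd.
by rewrite inE (subsetP (epg_dom_sub S)) // cyclic2C (epg_domP Dd).
Qed.

Lemma sub_epg_nbhd_card S x : (S \subset epg_nbhd S x) = (#|epg_nbhd S x| == #|S|).
Proof. by rewrite (subset_leqif_card (epg_nbhd_sub S x)).2. Qed.

(* Pick y of maximal order in N[x]. For z in N[x] with x \in <<z, y>> = <[u]>,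
   u lies in N[x], so maximality gives <[u]> = <[y]>; this applies first to
   z = x, and then, as x \in <[y]>, to every z. *)
Lemma epg_clique_nbhd_cycle G x :
  x \in G -> epg_clique (epg_nbhd G x) -> exists y, epg_nbhd G x = <[y]>.
Proof.
move=> Gx cl; have Nx := epg_nbhd_id Gx.
have [y Ny ymax] := @arg_maxnP _ x (mem (epg_nbhd G x)) (fun z => #[z]) Nx.
have GN := subsetP (epg_nbhd_sub G x).
have gen_in_cycle z : z \in epg_nbhd G x -> x \in <<[set z; y]>> ->
    z \in <[y]>.
  move=> Nz xzy; have /cyclicP[u def_u] := cl z y Nz Ny.
  have Nu : u \in epg_nbhd G x.
    have sZG : <<[set z; y]>> \subset G by rewrite gen2_subG !GN.
    rewrite inE (subsetP sZG) ?def_u ?cycle_id //=.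
    by apply: cyclic2_cycle (cycle_id u); rewrite -def_u.
  have yu : y \in <[u]> by rewrite -def_u mem_gen2r.
  have /eqP -> : <[y]> == <[u]>
    by rewrite eqEcard cycle_subG yu -!orderE; apply: ymax.
  by rewrite -def_u mem_gen2l.
have xy : x \in <[y]> by apply: gen_in_cycle; rewrite ?mem_gen2l.
exists y; apply/setP => z; apply/idP/idP => [Nz | zy].
  apply: gen_in_cycle => //; apply: subsetP xy.
  by rewrite cycle_subG mem_gen2r.
rewrite inE (cyclic2_cycle xy zy) andbT.
by apply: subsetP zy; rewrite cycle_subG GN.
Qed.

End Neighbourhoods.

Definition epg_profile (gT : finGroupType) (p n : nat) (G : {set gT}) :=
  [/\ #|G| = (p ^ 3 * n)%N, #|epg_dom G| = n &
      {in G :\: epg_dom G, forall x,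
        #|epg_nbhd G x| = (p * n)%N /\ epg_clique (epg_nbhd G x)}].

Section Transfer.
Variables (gT hT : finGroupType) (G : {group gT}) (H : {group hT}) (f : gT -> hT).
Hypotheses (injf : {in G &, injective f}) (imf : f @: G = H).
Hypothesis adjf : {in G &, forall x y, epg_adj x y = epg_adj (f x) (f y)}.

Lemma cyclic2_transfer :
  {in G &, forall x y, cyclic <<[set x; y]>> = cyclic <<[set f x; f y]>>}.
Proof. by move=> x y Gx Gy; rewrite !cyclic2_epg_adj adjf // (inj_in_eq injf). Qed.

Lemma mem_transfer x : x \in G -> f x \in H.
Proof. by move=> Gx; rewrite -imf imset_f. Qed.

Lemma card_transfer : #|H| = #|G|.
Proof. by rewrite -imf card_in_imset. Qed.

Lemma epg_nbhd_transfer x : x \in G -> f @: epg_nbhd G x = epg_nbhd H (f x).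
Proof.
move=> Gx; apply/setP => w; apply/imsetP/idP => [[y] | ].
  by rewrite inE => /andP[Gy cy] ->; rewrite inE mem_transfer -?cyclic2_transfer.
rewrite inE -imf => /andP[/imsetP[y Gy ->] cy].
by exists y; rewrite // inE Gy cyclic2_transfer.
Qed.

Lemma card_epg_nbhd_transfer x :
  x \in G -> #|epg_nbhd H (f x)| = #|epg_nbhd G x|.
Proof.
move=> Gx; rewrite -epg_nbhd_transfer // card_in_imset //.
have GN := subsetP (epg_nbhd_sub G x).
by move=> y z /GN Gy /GN Gz; apply: injf.
Qed.

Lemma mem_epg_dom_transfer x : x \in G -> (f x \in epg_dom H) = (x \in epg_dom G).
Proof.
move=> Gx; rewrite !inE Gx mem_transfer // !sub_epg_nbhd_card.
by rewrite card_epg_nbhd_transfer // card_transfer.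
Qed.

Lemma card_epg_dom_transfer : #|epg_dom H| = #|epg_dom G|.
Proof.
have sDG := subsetP (epg_dom_sub G).
have -> : epg_dom H = f @: epg_dom G.
  apply/setP => w; apply/idP/imsetP => [Dw | [x Dx ->]].
    have /imsetP[x Gx def_w] : w \in f @: G by rewrite imf (subsetP (epg_dom_sub H)).
    by exists x; rewrite // -mem_epg_dom_transfer -?def_w.
  by rewrite mem_epg_dom_transfer ?sDG.
by rewrite card_in_imset // => x y /sDG Gx /sDG; apply: injf.
Qed.

Lemma epg_clique_transfer x :
  x \in G -> epg_clique (epg_nbhd H (f x)) -> epg_clique (epg_nbhd G x).
Proof.
move=> Gx clH y z Ny Nz; have GN := subsetP (epg_nbhd_sub G x).
by rewrite cyclic2_transfer ?GN //; apply: clH; rewrite -epg_nbhd_transfer ?imset_f.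
Qed.

Lemma epg_profile_transfer p n : epg_profile p n H -> epg_profile p n G.
Proof.
case=> cardH cardDH nbhdH; split; first by rewrite -cardH card_transfer.
  by rewrite -cardDH card_epg_dom_transfer.
move=> x /setDP[Gx nDx]; have [] := nbhdH (f x).
  by rewrite inE mem_epg_dom_transfer ?nDx ?mem_transfer.
by rewrite card_epg_nbhd_transfer // => -> /(epg_clique_transfer Gx).
Qed.

End Transfer.

Lemma epg_isomorphic_profile (gT hT : finGroupType) (G : {group gT}) (H : {group hT})
    p n :
  epg_isomorphic G H -> epg_profile p n H -> epg_profile p n G.
Proof. by case=> f [injf imf adjf]; apply: (epg_profile_transfer injf imf adjf). Qed.

Definition pcube_x_cyclic (gT : finGroupType) (p n : nat) (G : {group gT}) :=
  exists P D : {group gT},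
    [/\ P \x D = G, #|P| = (p ^ 3)%N, exponent P %| p, #|D| = n & cyclic D].

Section ProfileStructure.
Variables (gT : finGroupType) (p n : nat) (G : {group gT}).
Hypotheses (p_pr : prime p) (n_gt0 : 0 < n) (np_coprime : coprime n p).
Hypothesis profG : epg_profile p n G.

Lemma epg_profile_nbhd x : x \in G :\: epg_dom G ->
  exists y, epg_nbhd G x = <[y]> /\ #[y] = (p * n)%N.
Proof.
case: profG => _ _ nbhdG DGx; have [cardN clN] := nbhdG x DGx.
have [y def_y] := epg_clique_nbhd_cycle (setDP DGx).1 clN.
by exists y; rewrite orderE -def_y.
Qed.

Lemma epg_profile_nondom : exists x, x \in G :\: epg_dom G.
Proof.
case: profG => cardG cardD _.
have lt_n : n < p ^ 3 * n by rewrite ltn_Pmull // -(exp1n 3) ltn_exp2r ?prime_gt1.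
apply/set0Pn; rewrite setD_eq0; apply: contraL lt_n => /subset_leq_card.
by rewrite cardG cardD leqNgt.
Qed.

Lemma epg_profile_cover w : w \in G ->
  exists y, [/\ #[y] = (p * n)%N, w \in <[y]> & epg_dom G \subset <[y]>].
Proof.
move=> Gw; have [x [DGx Nw]] : exists x, x \in G :\: epg_dom G /\ w \in epg_nbhd G x.
  case Dw: (w \in epg_dom G); last by exists w; rewrite inE Dw Gw epg_nbhd_id.
  have [x DGx] := epg_profile_nondom; exists x; split => //.
  exact: subsetP (epg_dom_sub_nbhd (setDP DGx).1) w Dw.
have [y [def_y oy]] := epg_profile_nbhd DGx.
by exists y; rewrite -def_y Nw epg_dom_sub_nbhd ?(setDP DGx).1.
Qed.

Lemma epg_dom_group_set : group_set (epg_dom G).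
Proof.
have sDG := subsetP (epg_dom_sub G).
apply/andP; split.
  by rewrite inE group1; apply/subsetP => w Gw; rewrite inE Gw cyclic21.
apply/subsetP => _ /mulsgP[d e Dd De ->].
rewrite inE groupM ?sDG //; apply/subsetP => w Gw; rewrite inE Gw /=.
have [y [_ wy /subsetP sDy]] := epg_profile_cover Gw.
by apply: cyclic2_cycle wy; rewrite groupM ?sDy.
Qed.

Lemma epg_profile_pcube_x_cyclic : pcube_x_cyclic p n G.
Proof.
case: profG => cardG cardD _; pose D := Group epg_dom_group_set.
have [y0 [_ _ sDy0]] := epg_profile_cover (group1 G).
have cGD : D \subset 'C(G).
  by apply/centsP => d Dd g Gg; apply/cyclic2_commute/(epg_domP Dd).
have orderG w : w \in G -> #[w] %| p * n.
  by move=> /epg_profile_cover[y [<- wy _]]; rewrite [#[y]]orderE order_dvdG.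
have [P sylP] := Sylow_exists p G; have sPG := pHall_sub sylP.
have p'n : p^'.-nat n by rewrite p'natE // -prime_coprime // coprime_sym.
have cardP : #|P| = (p ^ 3)%N.
  rewrite (card_Hall sylP) cardG partnM ?expn_gt0 ?(prime_gt0 p_pr) //.
  by rewrite (part_p'nat p'n) muln1 part_pnat_id // pnatX pnat_id.
have expP : exponent P %| p.
  apply/exponentP => z Pz; apply/eqP; rewrite -order_dvdn.
  have oz_n : coprime #[z] n.
    exact: pnat_coprime (mem_p_elt (pHall_pgroup sylP) Pz) p'n.
  by rewrite -(Gauss_dvdl p oz_n) orderG ?(subsetP sPG).
have tiPD : P :&: D = 1.
  by apply: coprime_TIg; rewrite cardP cardD coprimeXl // coprime_sym.
exists P, D; split => //; last exact: (@cyclicS _ _ D sDy0 (cycle_cyclic y0)).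
rewrite dprodE ?(subset_trans cGD (centS sPG)) //; apply/eqP.
by rewrite eqEcard mul_subG ?epg_dom_sub //= (TI_cardMg tiPD) cardP cardD cardG.
Qed.

End ProfileStructure.

Section ExponentPrime.
Variables (gT : finGroupType) (p : nat) (P : {group gT}).
Hypotheses (p_pr : prime p) (expP : exponent P %| p).
Implicit Types (a b x : gT).

Lemma order_exponent_prime a : a \in P -> a != 1 -> #[a] = p.
Proof.
move=> Pa nta; apply/(prime_nt_dvdP p_pr); first by rewrite order_eq1.
by rewrite order_dvdn (exponentP expP).
Qed.

Lemma mem_cycle_exponent_prime a b :
  a \in P -> b \in P -> a != 1 -> (a \in <[b]>) = (<[a]> == <[b]>).
Proof.
move=> Pa Pb nta; apply/idP/eqP => [ab | <-]; last exact: cycle_id.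
have ntb : b != 1 by apply: contraTneq ab => ->; rewrite cycle1 inE.
by apply/eqP; rewrite eqEcard cycle_subG ab -!orderE !order_exponent_prime ?leqnn.
Qed.

Lemma cyclic2_exponent_prime a b : a \in P -> b \in P ->
  cyclic <<[set a; b]>> = (a \in <[b]>) || (b \in <[a]>).
Proof.
move=> Pa Pb; apply/idP/idP => [/cyclicP[c def_c] | /orP[ab | ba]]; first 1 last.
- exact: cyclic2_cycle ab (cycle_id b).
- exact: cyclic2_cycle (cycle_id a) ba.
have [-> | nta] := eqVneq a 1; first by rewrite group1.
have Pc : c \in P by rewrite -cycle_subG -def_c gen2_subG Pa.
have /eqP def_a : <[a]> == <[c]>.
  by rewrite -mem_cycle_exponent_prime // -def_c mem_gen2l.
by rewrite def_a -def_c mem_gen2r orbT.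
Qed.

Definition prime_cycles := [set <[x]> | x in P^#].

Lemma card_cycleD1 x : x \in P^# -> #|<[x]>^#| = p.-1.
Proof.
case/setD1P => ntx Px; have := cardsD1 1 <[x]>.
by rewrite group1 -orderE order_exponent_prime // add1n => ->.
Qed.

Lemma card_prime_cycles : #|P^#| = (#|prime_cycles| * p.-1)%N.
Proof.
rewrite -sum1_card (partition_big_imset (fun x => <[x]>)) /= -sum_nat_const.
apply: eq_bigr => _ /imsetP[x Px ->]; rewrite -(card_cycleD1 Px) -sum1_card.
apply: eq_bigl => y; rewrite !inE; have [//= | nty] := eqVneq y 1.
case/setD1P: Px => _ Px; have [Py | nPy] := boolP (y \in P).
  by rewrite mem_cycle_exponent_prime.
by apply/esym/negbTE; apply: contra nPy; apply/subsetP; rewrite cycle_subG.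
Qed.

End ExponentPrime.

Section CoprimeDprod.
Variables (gT : finGroupType) (p : nat) (P D G : {group gT}).
Hypotheses (defG : P \x D = G) (pP : p.-group P) (p'D : p^'.-group D).

Lemma constt_dprod c d : c \in P -> d \in D -> (c * d).`_p = c /\ (c * d).`_p^' = d.
Proof.
move=> Pc Dd; have [_ _ cPD _] := dprodP defG.
have cd : commute c d by apply/commute_sym/(centsP cPD).
have [pc p'd] := (mem_p_elt pP Pc, mem_p_elt p'D Dd).
have d_p : d.`_p = 1 by apply/constt1P.
have c_p' : c.`_p^' = 1 by apply/constt1P; rewrite p_eltNK.
by rewrite !consttM // (constt_p_elt pc) (constt_p_elt p'd) d_p c_p' mulg1 mul1g.
Qed.

Lemma mem_dprod_constt x : x \in G -> x.`_p \in P /\ x.`_p^' \in D.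
Proof.
by case/(mem_dprod defG) => c [d [Pc Dd -> _]]; have [-> ->] := constt_dprod Pc Dd.
Qed.

Lemma mem_dprod_constt1 x : x \in G -> (x \in D) = (x.`_p == 1).
Proof.
move=> Gx; apply/idP/eqP => [Dx | x_p]; first exact/constt1P/(mem_p_elt p'D).
by rewrite -(consttC p x) x_p mul1g (mem_dprod_constt Gx).2.
Qed.

Hypothesis cycD : cyclic D.

Lemma cyclic2_dprod x y : x \in G -> y \in G ->
  cyclic <<[set x; y]>> = cyclic <<[set x.`_p; y.`_p]>>.
Proof.
move=> Gx Gy; have [[Px Dx] [Py Dy]] := (mem_dprod_constt Gx, mem_dprod_constt Gy).
apply/idP/idP => [|cycK].
  apply: cyclicS; rewrite gen2_subG.
  by rewrite !(subsetP _ _ (cycle_constt _ _)) // cycle_subG ?mem_gen2l ?mem_gen2r.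
set K := <<[set x.`_p; y.`_p]>>%G; set L := <<[set x.`_p^'; y.`_p^']>>%G.
have sKP : K \subset P by rewrite gen2_subG Px.
have sLD : L \subset D by rewrite gen2_subG Dx.
have [_ _ cPD _] := dprodP defG.
apply: (@cyclicS _ (K <*> L)); last first.
  apply: cyclicY; rewrite ?(cyclicS sLD) //.
    exact: subset_trans sLD (subset_trans cPD (centS sKP)).
  exact: pnat_coprime (pgroupS sKP pP) (pgroupS sLD p'D).
have mem_KL z : z.`_p \in K -> z.`_p^' \in L -> z \in K <*> L.
  by move=> Kz Lz; rewrite -(consttC p z) groupM ?mem_gen ?inE ?Kz ?Lz ?orbT.
by rewrite gen2_subG !mem_KL ?mem_gen2l ?mem_gen2r.
Qed.

Hypotheses (p_pr : prime p) (expP : exponent P %| p).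

Lemma mem_epg_nbhd_dprod v w : v \in G -> v.`_p != 1 ->
  (w \in epg_nbhd G v) = (w \in G) && (w.`_p \in <[v.`_p]>).
Proof.
move=> Gv ntv; rewrite inE; have [Gw /= | //] := boolP (w \in G).
have [[Pv _] [Pw _]] := (mem_dprod_constt Gv, mem_dprod_constt Gw).
rewrite cyclic2_dprod // (cyclic2_exponent_prime p_pr expP) //.
have [-> | ntw] := eqVneq w.`_p 1; first by rewrite group1 orbT.
by rewrite !(mem_cycle_exponent_prime p_pr expP) // eq_sym orbb.
Qed.

Lemma epg_nbhd_dprod1 v : v \in G -> v.`_p = 1 -> epg_nbhd G v = G.
Proof.
move=> Gv v_p; apply/setP => w; rewrite inE.
by have [Gw | //] := boolP (w \in G); rewrite cyclic2_dprod // v_p cyclic21.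
Qed.

Lemma epg_nbhd_dprod v : v \in G -> v.`_p != 1 -> epg_nbhd G v = <[v.`_p]> * D.
Proof.
move=> Gv ntv; have [Pv _] := mem_dprod_constt Gv.
have sVP : <[v.`_p]> \subset P by rewrite cycle_subG.
have [_ defPD _ _] := dprodP defG.
apply/setP => w; rewrite mem_epg_nbhd_dprod //.
apply/andP/idP => [[Gw Vw] | /mulsgP[c d Vc Dd ->]].
  by rewrite -(consttC p w) mem_mulg // (mem_dprod_constt Gw).2.
have [-> _] := constt_dprod (subsetP sVP c Vc) Dd.
by rewrite -defPD mem_mulg ?(subsetP sVP).
Qed.

Lemma card_epg_nbhd_dprod v : v \in G -> v.`_p != 1 ->
  #|epg_nbhd G v| = (p * #|D|)%N.
Proof.
move=> Gv ntv; have [Pv _] := mem_dprod_constt Gv.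
have sVP : <[v.`_p]> \subset P by rewrite cycle_subG.
rewrite epg_nbhd_dprod // TI_cardMg -?orderE ?(order_exponent_prime p_pr expP) //.
by apply: coprime_TIg; apply: pnat_coprime (pgroupS sVP pP) p'D.
Qed.

Lemma epg_dom_dprod : p < #|P| -> epg_dom G = D.
Proof.
move=> ltpP; apply/setP => v; rewrite inE sub_epg_nbhd_card.
have [Gv /= | nGv] := boolP (v \in G); last first.
  apply/esym/negbTE; apply: contra nGv.
  exact/subsetP/normal_sub/(dprod_normal2 defG).2.
rewrite mem_dprod_constt1 //; have [v_p | ntv] := eqVneq v.`_p 1.
  by rewrite epg_nbhd_dprod1 // eqxx.
rewrite card_epg_nbhd_dprod // -(dprod_card defG) eqn_pmul2r ?cardG_gt0 //.
by rewrite ltn_eqF.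
Qed.

Lemma epg_clique_nbhd_dprod v : v \in G -> v.`_p != 1 -> epg_clique (epg_nbhd G v).
Proof.
move=> Gv ntv w1 w2; rewrite !mem_epg_nbhd_dprod // => /andP[G1 V1] /andP[G2 V2].
by rewrite cyclic2_dprod // (cyclic2_cycle V1 V2).
Qed.

Lemma epg_profile_dprod : #|P| = (p ^ 3)%N -> epg_profile p #|D| G.
Proof.
move=> cardP; have ltpP : p < #|P| by rewrite cardP -{1}(expn1 p) ltn_exp2l ?prime_gt1.
split; [by rewrite -(dprod_card defG) cardP | by rewrite epg_dom_dprod |].
move=> v; rewrite epg_dom_dprod // => /setDP[Gv]; rewrite mem_dprod_constt1 // => ntv.
by rewrite card_epg_nbhd_dprod //; split; last exact: epg_clique_nbhd_dprod.
Qed.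

End CoprimeDprod.

Lemma pcube_x_cyclic_pgroups (gT : finGroupType) p n (P D : {group gT}) :
  prime p -> coprime n p -> #|P| = (p ^ 3)%N -> #|D| = n -> p.-group P /\ p^'.-group D.
Proof.
move=> p_pr np_coprime cardP cardD; rewrite /pgroup cardP cardD pnatX pnat_id //.
by rewrite p'natE // -prime_coprime // coprime_sym.
Qed.

Lemma pcube_x_cyclic_epg_profile (gT : finGroupType) p n (G : {group gT}) :
  prime p -> coprime n p -> pcube_x_cyclic p n G -> epg_profile p n G.
Proof.
move=> p_pr np_coprime [P [D [defG cardP expP cardD cycD]]].
have [pP p'D] := pcube_x_cyclic_pgroups p_pr np_coprime cardP cardD.
by rewrite -cardD; apply: (epg_profile_dprod defG).
Qed.

(* Locked so that unification never unfolds the enumerations. *)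
HB.lock
Definition transport {T U : finType} (u0 : U) (A : {set T}) (B : {set U}) x :=
  nth u0 (enum B) (index x (enum A)).

Section Transport.
Variables (T U : finType) (u0 : U) (A : {set T}) (B : {set U}).

Hypothesis cardAB : #|A| = #|B|.

Lemma index_enum_lt x : x \in A -> index x (enum A) < size (enum B).
Proof. by move=> Ax; rewrite -cardE -cardAB cardE index_mem mem_enum. Qed.

Lemma transport_mem x : x \in A -> transport u0 A B x \in B.
Proof. by move=> Ax; rewrite transport.unlock -mem_enum mem_nth ?index_enum_lt. Qed.

Lemma transport_inj : {in A &, injective (transport u0 A B)}.
Proof.
move=> x y Ax Ay /eqP; rewrite transport.unlock nth_uniq ?enum_uniq ?index_enum_lt //.
by move/eqP/(congr1 (nth x (enum A))); rewrite !nth_index ?mem_enum.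
Qed.

End Transport.

Section ExponentPrimeTransport.
Variables (gT hT : finGroupType) (p : nat) (P : {group gT}) (Q : {group hT}).
Hypotheses (p_pr : prime p) (expP : exponent P %| p) (expQ : exponent Q %| p).
Hypothesis cardPQ : #|P| = #|Q|.

Definition cycle_transport := transport set0 (prime_cycles P) (prime_cycles Q).

Definition epg_transport x :=
  if x == 1 then 1 else transport 1 <[x]>^# (cycle_transport <[x]>)^# x.

Lemma card_prime_cycles_eq : #|prime_cycles P| = #|prime_cycles Q|.
Proof.
have cardD1 (K : {group _}) : #|K^#| = #|K|.-1 by rewrite (cardsD1 1 K) group1.
have p1_gt0 : 0 < p.-1 by rewrite -subn1 subn_gt0 prime_gt1.
apply/eqP; rewrite -(eqn_pmul2r p1_gt0).
by rewrite -(card_prime_cycles p_pr expP) -(card_prime_cycles p_pr expQ) !cardD1 cardPQ.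
Qed.

Lemma cycle_transport_inj : {in prime_cycles P &, injective cycle_transport}.
Proof. exact: transport_inj card_prime_cycles_eq. Qed.

Lemma cycle_transportP x : x \in P^# ->
  exists2 y, y \in Q^# & cycle_transport <[x]> = <[y]>.
Proof.
move=> Px; have : cycle_transport <[x]> \in prime_cycles Q.
  by apply: transport_mem; rewrite ?card_prime_cycles_eq ?imset_f.
by case/imsetP=> y Qy ->; exists y.
Qed.

Lemma card_cycle_transportD1 x : x \in P^# ->
  #|<[x]>^#| = #|(cycle_transport <[x]>)^#|.
Proof.
move=> Px; have [y Qy ->] := cycle_transportP Px.
by rewrite (card_cycleD1 p_pr expP) ?(card_cycleD1 p_pr expQ).
Qed.

Lemma epg_transportP x : x \in P^# ->
  epg_transport x \in Q^# /\ <[epg_transport x]> = cycle_transport <[x]>.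
Proof.
move=> Px; have [y Qy def_y] := cycle_transportP Px.
have /setD1P[ntx _] := Px; have /setD1P[_ Q_y] := Qy.
have : epg_transport x \in <[y]>^#.
  rewrite /epg_transport (negbTE ntx) -def_y transport_mem ?card_cycle_transportD1 //.
  by rewrite !inE ntx cycle_id.
case/setD1P => ntfx yfx; have Qfx : epg_transport x \in Q.
  by apply: subsetP yfx; rewrite cycle_subG.
split; first by rewrite !inE ntfx Qfx.
by rewrite def_y; apply/eqP; rewrite -(mem_cycle_exponent_prime p_pr expQ).
Qed.

Lemma epg_transport1 : epg_transport 1 = 1.
Proof. by rewrite /epg_transport eqxx. Qed.

Lemma mem_epg_transport x : x \in P -> epg_transport x \in Q.
Proof.
move=> Px; have [-> | ntx] := eqVneq x 1; first by rewrite epg_transport1 group1.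
have P1x : x \in P^# by rewrite !inE ntx.
by case/setD1P: (epg_transportP P1x).1.
Qed.

Lemma epg_transport_eq1 x : x \in P -> (epg_transport x == 1) = (x == 1).
Proof.
move=> Px; have [-> | ntx] := eqVneq x 1; first by rewrite epg_transport1 eqxx.
have P1x : x \in P^# by rewrite !inE ntx.
by case/setD1P: (epg_transportP P1x).1 => /negbTE.
Qed.

Lemma epg_transport_inj : {in P &, injective epg_transport}.
Proof.
move=> a b Pa Pb eq_f; have [a1 | nta] := eqVneq a 1.
  rewrite a1 in eq_f *.
  by apply/esym/eqP; rewrite -(epg_transport_eq1 Pb) -eq_f epg_transport1.
have ntb : b != 1 by rewrite -(epg_transport_eq1 Pb) -eq_f epg_transport_eq1.
have [P1a P1b] : a \in P^# /\ b \in P^# by rewrite !inE nta ntb.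
have eq_ab : <[a]> = <[b]>.
  apply: cycle_transport_inj; rewrite ?imset_f //.
  by rewrite -(epg_transportP P1a).2 -(epg_transportP P1b).2 eq_f.
move: eq_f; rewrite /epg_transport (negbTE nta) (negbTE ntb) eq_ab.
apply: transport_inj; rewrite ?card_cycle_transportD1 //.
  by rewrite !inE nta -eq_ab cycle_id.
by rewrite !inE ntb cycle_id.
Qed.

Lemma mem_cycle_epg_transport a b : a \in P -> b \in P ->
  (epg_transport a \in <[epg_transport b]>) = (a \in <[b]>).
Proof.
move=> Pa Pb; have [-> | nta] := eqVneq a 1; first by rewrite epg_transport1 !group1.
have [-> | ntb] := eqVneq b 1.
  by rewrite epg_transport1 !cycle1 !inE epg_transport_eq1 ?(negbTE nta).
have [P1a P1b] : a \in P^# /\ b \in P^# by rewrite !inE nta ntb.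
rewrite (mem_cycle_exponent_prime p_pr expQ) ?mem_epg_transport ?epg_transport_eq1 //.
rewrite (mem_cycle_exponent_prime p_pr expP) //.
rewrite (epg_transportP P1a).2 (epg_transportP P1b).2.
by rewrite (inj_in_eq cycle_transport_inj) ?imset_f.
Qed.

Lemma cyclic2_epg_transport a b : a \in P -> b \in P ->
  cyclic <<[set epg_transport a; epg_transport b]>> = cyclic <<[set a; b]>>.
Proof.
move=> Pa Pb; rewrite (cyclic2_exponent_prime p_pr expQ) ?mem_epg_transport //.
by rewrite (cyclic2_exponent_prime p_pr expP) // !mem_cycle_epg_transport.
Qed.

End ExponentPrimeTransport.

Section DprodTransport.
Variables (gT hT : finGroupType) (p : nat) (P D G : {group gT}) (Q E H : {group hT}).
Hypotheses (p_pr : prime p) (defG : P \x D = G) (defH : Q \x E = H).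
Hypotheses (pP : p.-group P) (p'D : p^'.-group D).
Hypotheses (pQ : p.-group Q) (p'E : p^'.-group E).
Hypotheses (expP : exponent P %| p) (expQ : exponent Q %| p).
Hypotheses (cycD : cyclic D) (cycE : cyclic E).
Hypotheses (cardPQ : #|P| = #|Q|) (cardDE : #|D| = #|E|).

Let constt_memG := mem_dprod_constt defG pP p'D.

Definition dprod_transport x := epg_transport P Q x.`_p * transport 1 D E x.`_p^'.

Lemma dprod_transport_constt x : x \in G ->
  [/\ (dprod_transport x).`_p = epg_transport P Q x.`_p,
      (dprod_transport x).`_p^' = transport 1 D E x.`_p^'
    & dprod_transport x \in H].
Proof.
move=> Gx; have [Px Dx] := constt_memG Gx.
have Qfx := mem_epg_transport p_pr expP expQ cardPQ Px.
have Efx := transport_mem 1 cardDE Dx.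
have [-> ->] := constt_dprod defH pQ p'E Qfx Efx.
by have [_ <- _ _] := dprodP defH; split; rewrite ?mem_mulg.
Qed.

Lemma dprod_transport_inj : {in G &, injective dprod_transport}.
Proof.
move=> x y Gx Gy eq_f; rewrite -(consttC p x) -(consttC p y).
have [[Px Dx] [Py Dy]] := (constt_memG Gx, constt_memG Gy).
have [fx_p fx_p' _] := dprod_transport_constt Gx.
have [fy_p fy_p' _] := dprod_transport_constt Gy.
congr (_ * _).
  by apply: (epg_transport_inj p_pr expP expQ cardPQ Px Py); rewrite -fx_p -fy_p eq_f.
by apply: (transport_inj (u0 := 1) cardDE Dx Dy); rewrite -fx_p' -fy_p' eq_f.
Qed.

Lemma epg_isomorphic_dprod : epg_isomorphic G H.
Proof.
have mem_f x : x \in G -> dprod_transport x \in H by case/dprod_transport_constt.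
exists dprod_transport; split; first exact: dprod_transport_inj.
  apply/eqP; rewrite eqEcard (card_in_imset dprod_transport_inj).
  rewrite -(dprod_card defG) -(dprod_card defH) cardPQ cardDE leqnn andbT.
  by apply/subsetP => _ /imsetP[x Gx ->]; apply: mem_f.
move=> x y Gx Gy; rewrite /epg_adj (inj_in_eq dprod_transport_inj) //.
rewrite (cyclic2_dprod defG pP p'D cycD) // (cyclic2_dprod defH pQ p'E cycE) ?mem_f //.
have [[fx_p _ _] [fy_p _ _]] := (dprod_transport_constt Gx, dprod_transport_constt Gy).
have [[Px _] [Py _]] := (constt_memG Gx, constt_memG Gy).
by rewrite fx_p fy_p (cyclic2_epg_transport p_pr).
Qed.

End DprodTransport.

Lemma pcube_x_cyclic_epg_isomorphic (gT hT : finGroupType) p n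
    (G : {group gT}) (H : {group hT}) :
  prime p -> coprime n p -> pcube_x_cyclic p n G -> pcube_x_cyclic p n H ->
  epg_isomorphic G H.
Proof.
move=> p_pr np_coprime [P [D [defG cardP expP cardD cycD]]].
case=> [Q [E [defH cardQ expQ cardE cycE]]].
have [pP p'D] := pcube_x_cyclic_pgroups p_pr np_coprime cardP cardD.
have [pQ p'E] := pcube_x_cyclic_pgroups p_pr np_coprime cardQ cardE.
by apply: (epg_isomorphic_dprod p_pr defG defH); rewrite ?cardP ?cardQ ?cardD ?cardE.
Qed.

Lemma pcube_x_cyclic_isog (gT hT : finGroupType) p n (G : {group gT}) (X : {group hT}) :
  G \isog X -> pcube_x_cyclic p n X -> pcube_x_cyclic p n G.
Proof.
rewrite isog_sym => /isogP[f injf im_f] [P [D [defX cardP expP cardD cycD]]].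
have [sPX sDX] : P \subset X /\ D \subset X.
  by case/dprodP: defX => _ <- _ _; rewrite mulG_subl ?mulG_subr.
exists (f @* P)%G, (f @* D)%G; split; rewrite ?card_injm ?exponent_injm ?injm_cyclic //.
by rewrite -im_f; apply: injm_dprod.
Qed.

Lemma Zp_cyclic n : cyclic (Zp n).
Proof. by rewrite /Zp; case: ifP => _; rewrite ?cyclic1 // Zp_cycle cycle_cyclic. Qed.

Lemma setX_abelem (gT hT : finGroupType) p (A : {group gT}) (B : {group hT}) :
  p.-abelem (setX A B) = p.-abelem A && p.-abelem B.
Proof.
rewrite (dprod_abelem _ (setX_dprod A B)).
by rewrite -(isog_abelem (isog_setX1 hT A)) -(isog_abelem (isog_set1X gT B)).
Qed.

Definition Zp3 p := setX_group (setX_group (Zp_group p) (Zp_group p)) (Zp_group p).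

Lemma Zp3_abelem p : prime p -> p.-abelem (Zp3 p).
Proof. by move=> p_pr; rewrite !setX_abelem prime_abelem ?card_Zp ?prime_gt0. Qed.

Lemma card_Zp3 p : 0 < p -> #|Zp3 p| = (p ^ 3)%N.
Proof. by move=> p_gt0; rewrite !cardsX !card_Zp // !expnS expn0 muln1 mulnA. Qed.

Lemma pcube_x_cyclic_setX (gT : finGroupType) p n (P : {group gT}) :
  0 < n -> #|P| = (p ^ 3)%N -> exponent P %| p ->
  pcube_x_cyclic p n (setX_group P (Zp_group n)).
Proof.
move=> n_gt0 cardP expP; exists (setX_group P 1), (setX_group 1 (Zp_group n)).
rewrite setX_dprod -(exponent_isog (isog_setX1 _ P)) -(isog_cyclic (isog_set1X _ _)).
by rewrite !cardsX !cards1 muln1 mul1n card_Zp ?Zp_cyclic.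
Qed.

Lemma isog_dprod_setX (gT hT : finGroupType) n (P D G : {group gT}) (X : {group hT}) :
  P \x D = G -> cyclic D -> #|D| = n -> 0 < n -> P \isog X ->
  G \isog setX_group X (Zp_group n).
Proof.
move=> defG cycD cardD n_gt0 isoPX; apply: isog_dprod defG (setX_dprod X _) _ _.
  exact: isog_trans isoPX (isog_setX1 _ X).
apply: isog_trans (isog_set1X _ (Zp_group n)).
by rewrite (isog_cyclic_card _ cycD) /= Zp_cyclic card_Zp ?cardD ?eqxx.
Qed.

Lemma pcube_x_cyclic_classify (gT : finGroupType) p n (G : {group gT}) :
  prime p -> 2 < p -> 0 < n -> pcube_x_cyclic p n G ->
  G \isog Zppp_n p n \/ G \isog K_n p n.
Proof.
move=> p_pr p_gt2 n_gt0 [P [D [defG cardP expP cardD cycD]]].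
have pP : p.-group P by rewrite /pgroup cardP pnatX pnat_id.
have [cPP | ncPP] := boolP (abelian P); [left | right];
  apply: isog_dprod_setX defG cycD cardD n_gt0 _.
  have abelP : p.-abelem P by rewrite abelemE // cPP.
  rewrite (isog_abelem_card _ abelP) Zp3_abelem //.
  by rewrite card_Zp3 ?(prime_gt0 p_pr) ?cardP ?eqxx.
apply: isog_pX1p2 => //.
by apply: (p3group_extraspecial pP ncPP); rewrite cardP pfactorK.
Qed.

Lemma pcube_x_cyclic_Zppp_n p n : prime p -> 0 < n -> pcube_x_cyclic p n (Zppp_n p n).
Proof.
move=> p_pr n_gt0; apply: pcube_x_cyclic_setX; rewrite ?card_Zp3 ?(prime_gt0 p_pr) //.
by have := Zp3_abelem p_pr; rewrite abelemE // => /andP[].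
Qed.

Lemma pcube_x_cyclic_K_n p n :
  prime p -> 2 < p -> 0 < n -> pcube_x_cyclic p n (K_n p n).
Proof.
move=> p_pr p_gt2 n_gt0; apply: pcube_x_cyclic_setX; rewrite ?card_pX1p2 //.
by apply: exponent_pX1p2; case: (even_prime p_pr) p_gt2 => [-> |].
Qed.

Unset Implicit Arguments.

Theorem theorem8 (gT : finGroupType) (G : {group gT}) (p n : nat) :
  prime p -> 2 < p -> 0 < n -> coprime n p ->
  (epg_isomorphic G (Zppp_n p n) <-> (G \isog Zppp_n p n \/ G \isog K_n p n)).
Proof.
move=> p_pr p_gt2 n_gt0 np_coprime.
have Zppp_nS := pcube_x_cyclic_Zppp_n p_pr n_gt0.
have K_nS := pcube_x_cyclic_K_n p_pr p_gt2 n_gt0.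
split => [isoG | isogG].
  apply: pcube_x_cyclic_classify => //; apply: epg_profile_pcube_x_cyclic => //.
  apply: epg_isomorphic_profile isoG _.
  exact: pcube_x_cyclic_epg_profile p_pr np_coprime Zppp_nS.
apply: (pcube_x_cyclic_epg_isomorphic p_pr np_coprime _ Zppp_nS).
by case: isogG => /pcube_x_cyclic_isog; apply.
Qed.
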